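(* Let $H$ be a non-transitive tournament with $6$ vertices. If $H$ contains twins or has a non-trivial automorphism, then $H$ is not quasirandom-forcing.
   Context: A tournament is an orientation of a complete graph; $\mathrm{Aut}(H)$ is its automorphism group. Two vertices $u,v$ of a tournament are twins if every out-neighbor of $u$, possibly except $v$, is an out-neighbor of $v$, and every out-neighbor of $v$, possibly except $u$, is an out-neighbor of $u$. For tournaments $H,G$, $d(H,G)$ is the probability that $\lvert H\rvert$ uniformly random distinct vertices of $G$ induce a tournament isomorphic to $H$ (and $0$ if $\lvert H\rvert>\lvert G\rvert$). A sequence $(G_n)$ of tournaments with $\lvert G_n\rvert\to\infty$ is quasirandom if $\lim_{n\to\infty} d(F,G_n)=\frac{m!}{\lvert\mathrm{Aut}(F)\rvert}2^{-\binom{m}{2}}$ for every tournament $F$ with $m$ vertices. A $k$-vertex tournament $H$ is quasirandom-forcing if every sequence $(G_n)$ of tournaments with $\lvert G_n\rvert\to\infty$ and $\lim_{n\to\infty} d(H,G_n)=\frac{k!}{\lvert\mathrm{Aut}(H)\rvert}2^{-\binom{k}{2}}$ is quasirandom. *)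

From mathcomp Require Import all_boot all_fingroup.
From Stdlib Require Import Reals.

Unset Implicit Arguments.
Unset Strict Implicit.
Unset Printing Implicit Defensive.

Record tournament := Tournament {
  tvcount : nat;
  tadj : rel 'I_tvcount;   (* tadj i j : the edge is oriented i -> j *)
  tadj_irr : forall i, ~~ tadj i i;
  tadj_tot : forall i j, i != j -> tadj i j = ~~ tadj j i }.
Arguments tadj : clear implicits.

Definition is_aut (H : tournament) (s : {perm 'I_(tvcount H)}) : bool :=
  [forall i, [forall j, tadj H (s i) (s j) == tadj H i j]].

Definition aut_card (H : tournament) : nat :=
  #|[set s : {perm 'I_(tvcount H)} | is_aut H s]|.

Definition has_nontrivial_aut (H : tournament) : Prop :=
  exists s : {perm 'I_(tvcount H)}, s != 1%g /\ is_aut H s.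

Definition transitive_tournament (H : tournament) : Prop :=
  forall a b c, tadj H a b -> tadj H b c -> tadj H a c.

Definition twins (H : tournament) (u v : 'I_(tvcount H)) : Prop :=
  u != v /\
  (forall w, w != v -> tadj H u w -> tadj H v w) /\
  (forall w, w != u -> tadj H v w -> tadj H u w).

Definition has_twins (H : tournament) : Prop :=
  exists u v, twins H u v.

Definition induces_copy (H G : tournament)
  (f : {ffun 'I_(tvcount H) -> 'I_(tvcount G)}) : bool :=
  injectiveb f &&
  [exists s : {perm 'I_(tvcount H)},
     [forall i, [forall j, tadj H i j == tadj G (f (s i)) (f (s j))]]].

(* d(H,G): probability that |H| uniformly random distinct vertices of G
   induce a tournament isomorphic to H (0 if |H| > |G|). *)
Definition dens (H G : tournament) : R :=
  if (tvcount G < tvcount H)%N then 0%R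
  else (INR #|[set f | induces_copy H G f]| / INR (tvcount G ^_ tvcount H))%R.

Definition rand_dens (F : tournament) : R :=
  (INR (tvcount F)`! / INR (aut_card F) * / (2 ^ 'C(tvcount F, 2)))%R.

Definition size_to_infty (G : nat -> tournament) : Prop :=
  forall M : nat, exists N : nat, forall n : nat, (N <= n)%N -> (M <= tvcount (G n))%N.

Definition quasirandom (G : nat -> tournament) : Prop :=
  size_to_infty G /\
  forall F : tournament, Un_cv (fun n => dens F (G n)) (rand_dens F).

Definition quasirandom_forcing (H : tournament) : Prop :=
  forall G : nat -> tournament,
    size_to_infty G ->
    Un_cv (fun n => dens H (G n)) (rand_dens H) ->
    quasirandom G.

From Stdlib Require Import Reals Lra ClassicalEpsilon.
From mathcomp Require Import all_boot all_fingroup zify.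

(** Let [n = |H|] and blow [H] up by replacing every vertex with a transitive
    tournament on [m] vertices.  Each transversal of the parts induces a copy of [H],
    which gives [n! m^n] labelled copies; a pair of twins gives half as many again by
    putting both twins into one part, while a non-trivial automorphism at least halves
    the random density [n! / (|Aut H| 2^C(n,2))].  As [2 n^n <= 3 2^C(n,2)] for [n = 6], in
    both cases [H] is at least as dense in the blow-up as in a random tournament.

    Now let [interp k] follow the blow-up on its first [k] vertices and the vertex
    order elsewhere.  Consecutive interpolants differ at a single vertex, so the
    density of [H] moves by [O(1/N)] per step, from [0] (as [H] is not transitive) to
    at least its random value: some interpolant gets within [O(1/N)] of it.  Every
    interpolant is transitive on its first part, a sixth of its vertices, so it
    contains the transitive tournament [T_32] with density at least [1/(32! 12^32)],
    whereas its random density is at most [32!/2^496]: these interpolants form a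
    sequence that is not quasirandom. *)

Set Implicit Arguments.
Unset Strict Implicit.
Unset Printing Implicit Defensive.

Lemma card_family_prod (aT rT : finType) (F : aT -> pred rT) :
  #|(family F : simpl_pred {ffun aT -> rT})| = \prod_(x : aT) #|F x|.
Proof. by rewrite card_family foldrE big_map big_enum. Qed.

Lemma card_bigcup_leq (I T : finType) (A : I -> {set T}) :
  #|\bigcup_i A i| <= \sum_i #|A i|.
Proof.
elim/big_rec2: _ => [|i m U _ IH]; first by rewrite cards0.
by rewrite (leq_trans (leq_card_setU _ _).1) // leq_add2l.
Qed.

Lemma card_ffun_fixed_at (n N : nat) (i : 'I_n) (x : 'I_N) :
  #|[set f : {ffun 'I_n -> 'I_N} | f i == x]| = N ^ n.-1.
Proof.
pose F j := if j == i then pred1 x else predT.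
have -> : #|[set f : {ffun 'I_n -> 'I_N} | f i == x]| = #|family F|.
  apply: eq_card => f; rewrite inE; apply/eqP/familyP => [fi j | /(_ i)].
    by rewrite /F; case: eqP => [->|]; rewrite ?inE ?fi.
  by rewrite /F eqxx inE => /eqP.
rewrite card_family_prod (bigD1 i) //= /F eqxx card1 mul1n.
rewrite (eq_bigr (fun=> N)) => [|j /negbTE ->]; last by rewrite card_ord.
by rewrite prod_nat_const cardC1 card_ord.
Qed.

Lemma card_ffun_hitting (n N : nat) (x : 'I_N) :
  #|[set f : {ffun 'I_n -> 'I_N} | x \in codom f]| <= n * N ^ n.-1.
Proof.
apply: (@leq_trans #|\bigcup_i [set f : {ffun 'I_n -> 'I_N} | f i == x]|).
  apply/subset_leq_card/subsetP => f; rewrite inE => /codomP[i ->].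
  by apply/bigcupP; exists i; rewrite ?inE.
apply: leq_trans (card_bigcup_leq _) _.
by rewrite (eq_bigr _ (fun i _ => card_ffun_fixed_at i x)) sum_nat_const card_ord.
Qed.

Lemma card_ord_divn_eq (N d c : nat) : 0 < d -> c.+1 * d <= N ->
  #|[pred a : 'I_N | a %/ d == c]| = d.
Proof.
move=> d_gt0 cdN; have lt_N (j : 'I_d) : c * d + j < N.
  by apply: leq_trans cdN; rewrite mulSn addnC ltn_add2r.
rewrite -[RHS]card_ord -(card_imset _ (f := fun j => Ordinal (lt_N j))); last first.
  by move=> i j /(congr1 val) /= /addnI /val_inj.
apply: eq_card => a; rewrite !inE; apply/eqP/imsetP => [ac | [j _ ->]].
  exists (Ordinal (ltn_pmod a d_gt0)) => //; apply: val_inj => /=.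
  by rewrite {1}(divn_eq a d) ac addnC.
by rewrite /= divnMDl // divn_small ?addn0.
Qed.

Lemma prod_nat_except2 (I : finType) (u v : I) (x y z : nat) : u != v ->
  \prod_(w : I) (if w == u then x else if w == v then y else z) = x * y * z ^ (#|I| - 2).
Proof.
move=> uv; rewrite (bigD1 u) //= eqxx (bigD1 v) 1?eq_sym //= eqxx (negbTE uv) mulnA.
rewrite (eq_bigr (fun=> z)) => [|w /andP[/negbTE -> /negbTE ->] //].
rewrite prod_nat_const -(cardsC [set u; v]) cards2 uv addKn; congr (_ * _ ^ _).
by apply: eq_card => w; rewrite !inE negb_or.
Qed.

Lemma leq_expn2r (a b e : nat) : a <= b -> a ^ e <= b ^ e.
Proof. by move=> ab; elim: e => // e IH; rewrite !expnS leq_mul. Qed.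

Lemma fact_leq_expn (k : nat) : k`! <= k ^ k.
Proof.
elim: k => // k IH; rewrite factS expnS leq_mul //.
by apply: leq_trans IH (leq_expn2r k (leqnSn k)).
Qed.

Lemma ffact_leq_expn (N k : nat) : N ^_ k <= N ^ k.
Proof.
rewrite ffact_prod -[k in N ^ k]card_ord -prod_nat_const.
by apply: leq_prod => i _; rewrite leq_subr.
Qed.

Lemma expn_leq_ffact (N k : nat) : (N - k.-1) ^ k <= N ^_ k.
Proof.
rewrite ffact_prod -[k in _ ^ k]card_ord -prod_nat_const; apply: leq_prod => i _.
by apply: leq_sub2l; rewrite -ltnS (leq_trans (ltn_ord i)) // leqSpred.
Qed.

Lemma expn_leq_pow2_ffact (N k : nat) : 2 * k <= N -> N ^ k <= 2 ^ k * N ^_ k.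
Proof.
move=> kN; apply: leq_trans (leq_mul (leqnn _) (expn_leq_ffact N k)).
by rewrite -expnMn leq_expn2r //; lia.
Qed.

Lemma ltn_ord_irr (K : nat) (i : 'I_K) : ~~ (i < i).
Proof. by rewrite ltnn. Qed.

Lemma ltn_ord_tot (K : nat) (i j : 'I_K) : i != j -> (i < j) = ~~ (j < i).
Proof. by move=> ij; rewrite -leqNgt ltn_neqAle; move: ij; rewrite -val_eqE => ->. Qed.

Section TournamentFacts.
Variable H : tournament.
Local Notation n := (tvcount H).

Lemma tvcount_gt0_intransitive : ~ transitive_tournament H -> 0 < n.
Proof.
move=> H_intrans; rewrite ltnNge; apply/negP => n_le0; apply: H_intrans => a.
by have := leq_trans (ltn_ord a) n_le0.
Qed.

Lemma twins_sym (u v : 'I_n) : twins H u v -> twins H v u.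
Proof. by case=> uv [uv_out vu_out]; split; [rewrite eq_sym | split]. Qed.

Lemma twins_adj (u v a b w : 'I_n) : twins H u v ->
  a \in [:: u; v] -> b \in [:: u; v] -> w \notin [:: u; v] ->
  tadj H a w = tadj H b w /\ tadj H w a = tadj H w b.
Proof.
move=> [_ [uv_out vu_out]] aP bP wP.
have adj_out c : c \in [:: u; v] -> tadj H c w = tadj H u w.
  move: wP; rewrite !inE negb_or => /andP[wu wv] /orP[] /eqP -> //.
  by apply/idP/idP; [apply: vu_out | apply: uv_out].
have w_neq c : c \in [:: u; v] -> w != c by move=> cP; apply: contraNneq wP => ->.
have out_ab : tadj H a w = tadj H b w by rewrite !adj_out.
by rewrite (tadj_tot _ _ _ (w_neq a aP)) (tadj_tot _ _ _ (w_neq b bP)) out_ab.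
Qed.

Lemma aut_card_gt0 : 0 < aut_card H.
Proof.
rewrite card_gt0; apply/set0Pn; exists 1%g.
by rewrite inE; apply/forallP => i; apply/forallP => j; rewrite !perm1.
Qed.

Lemma aut_card_gt1 : has_nontrivial_aut H -> 1 < aut_card H.
Proof.
move=> [s [s1 s_aut]]; apply: leq_trans (subset_leq_card (_ : [set 1%g; s] \subset _)).
  by rewrite cards2 eq_sym s1.
apply/subsetP => x; rewrite !inE => /orP[] /eqP -> //.
by apply/forallP => i; apply/forallP => j; rewrite !perm1.
Qed.

Lemma aut_fixing_all_but_two (t : {perm 'I_n}) (u v : 'I_n) :
  (forall i j, tadj H (t i) (t j) = tadj H i j) ->
  (forall w, w \notin [:: u; v] -> t w = w) -> t = 1%g.
Proof.
move=> t_aut t_fix.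
have t_pair x : x \in [:: u; v] -> t x \in [:: u; v].
  move=> xP; apply: contraT => txP.
  by have /perm_inj tx := t_fix _ txP; rewrite tx xP in txP.
have uP : u \in [:: u; v] by rewrite mem_head.
have vP : v \in [:: u; v] by rewrite !inE eqxx orbT.
have tu : t u = u.
  apply/eqP; apply: contraT => tu_u.
  have tu_v : t u = v by move: (t_pair u uP); rewrite !inE (negbTE tu_u) => /eqP.
  have uv : u != v by rewrite -tu_v eq_sym.
  have tv_v : t v != v by rewrite -{2}tu_v (inj_eq perm_inj) eq_sym.
  have tv_u : t v = u by move: (t_pair v vP); rewrite !inE (negbTE tv_v) orbF => /eqP.
  by have := tadj_tot _ _ _ uv; rewrite -t_aut tu_v tv_u; case: tadj.
have tv : t v = v.
  by move: (t_pair v vP); rewrite !inE -{1}tu (inj_eq perm_inj) => /orP[] /eqP // ->.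
apply/permP => x; rewrite perm1; case: (boolP (x \in [:: u; v])) => [| /t_fix //].
by rewrite !inE => /orP[] /eqP ->.
Qed.

End TournamentFacts.

Definition transT (K : nat) : tournament :=
  @Tournament K (fun i j => (i < j)) (@ltn_ord_irr K) (@ltn_ord_tot K).

(** * Counting copies *)

Section Copies.
Variables (H : tournament) (N : nat).
Local Notation n := (tvcount H).

Definition is_copy (E : rel 'I_N) (f : {ffun 'I_n -> 'I_N}) : bool :=
  injectiveb f &&
  [exists s : {perm 'I_n}, [forall i, [forall j, tadj H i j == E (f (s i)) (f (s j))]]].

Definition copies (E : rel 'I_N) : nat := #|[set f | is_copy E f]|.

Lemma eq_copies (E1 E2 : rel 'I_N) : E1 =2 E2 -> copies E1 = copies E2.
Proof.
move=> E12; apply: eq_card => f; rewrite !inE /is_copy.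
by under eq_existsb => s do under eq_forallb => i do under eq_forallb => j do rewrite E12.
Qed.

Lemma copies_vertex_change (E1 E2 : rel 'I_N) (z : 'I_N) :
  {in predC1 z &, E1 =2 E2} -> copies E1 <= copies E2 + n * N ^ n.-1.
Proof.
move=> E12; apply: leq_trans (leq_add (leqnn _) (card_ffun_hitting n z)).
apply: leq_trans (leq_card_setU _ _).1; apply/subset_leq_card/subsetP => f.
rewrite in_setU !in_set; case: (boolP (z \in _)) => [_|zf]; rewrite ?orbT // orbF.
rewrite /is_copy; case/andP=> -> /existsP[s /forallP copy_f]; apply/existsP; exists s.
apply/forallP => i; apply/forallP => j; rewrite -E12 ?(forallP (copy_f i)) //.
  by rewrite inE; apply: contraNneq zf => <-; apply: codom_f.
by rewrite inE; apply: contraNneq zf => <-; apply: codom_f.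
Qed.

Lemma copies_eq0_transitive (E : rel 'I_N) :
  ~ transitive_tournament H -> transitive E -> copies E = 0.
Proof.
move=> intrH trE; apply: eq_card0 => f; rewrite inE.
apply/negP => /andP[_ /existsP[s /forallP copy_f]]; apply: intrH => a b c.
have adjE i j : tadj H i j = E (f (s i)) (f (s j)) by apply/eqP/(forallP (copy_f i)).
by rewrite !adjE; apply: trE.
Qed.

Lemma fact_card_leq_copies (E : rel 'I_N) (S : {set {ffun 'I_n -> 'I_N}}) :
  {in S, forall g : {ffun 'I_n -> 'I_N},
     injective g /\ forall i j, tadj H i j = E (g i) (g j)} ->
  {in S &, forall (g g' : {ffun 'I_n -> 'I_N}) (t : {perm 'I_n}),
     (forall i, g i = g' (t i)) -> t = 1%g} ->
  n`! * #|S| <= copies E.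
Proof.
move=> embS rigidS.
pose glue (p : {perm 'I_n} * {ffun 'I_n -> 'I_N}) := [ffun i => p.2 (p.1 i)].
rewrite -card_Sn -cardsT -cardsX -(card_in_imset (f := glue)); last first.
  move=> [s g] [s' g'] /setXP[_ gS] /setXP[_ g'S] /ffunP glue_eq.
  have g_eq i : g i = g' ((s^-1 * s')%g i).
    by have := glue_eq (s^-1 i)%g; rewrite !ffunE /= permKV permM.
  have ss' : s' = s by rewrite -(mulKVg s s') (rigidS _ _ gS g'S _ g_eq) mulg1.
  by rewrite ss'; congr pair; apply/ffunP => j; rewrite g_eq /= ss' mulVg perm1.
apply/subset_leq_card/subsetP => _ /imsetP[[s g] /setXP[_ gS] ->].
have [inj_g adj_g] := embS g gS.
rewrite inE; apply/andP; split.
  by apply/injectiveP => i j; rewrite !ffunE => /inj_g/perm_inj.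
apply/existsP; exists s^-1%g; apply/forallP => i; apply/forallP => j.
by rewrite !ffunE !permKV adj_g.
Qed.

End Copies.

Lemma bin_leq_copies_transT (K M N : nat) (E : rel 'I_N) : M <= N ->
  (forall a b : 'I_N, a < M -> b < M -> E a b = (a < b)) ->
  'C(M, K) <= copies (transT K) E.
Proof.
move=> MN E_ltn; rewrite -card_ltn_sorted_tuples.
pose emb (t : K.-tuple 'I_M) : {ffun 'I_K -> 'I_N} := [ffun i => widen_ord MN (tnth t i)].
rewrite -(card_imset _ (f := emb)); last first.
  move=> t t' emb_eq; apply: eq_from_tnth => i; apply: val_inj.
  by have := congr1 (fun f : {ffun 'I_K -> 'I_N} => val (f i)) emb_eq; rewrite !ffunE.
apply/subset_leq_card/subsetP => f /imsetP[t]; rewrite inE => t_sorted ->.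
pose h := nth 0 (map val t).
have h_homo : {in [pred i | i < K] &, {homo h : i j / i < j}}.
  by have := sorted_ltn_nth ltn_trans 0 t_sorted; rewrite size_map size_tuple.
have h_mono := leqW_mono_in (leq_mono_in h_homo).
have tE i : val (tnth t i) = h i by rewrite /h (nth_map (tnth t i)) ?size_tuple // -tnth_nth.
rewrite inE; apply/andP; split.
  apply/injectiveP => i j; rewrite !ffunE => /(congr1 val) /=; rewrite !tE => hij.
  by apply: val_inj; apply: (incn_inj_in (leq_mono_in h_homo)) hij; rewrite inE.
apply/existsP; exists 1%g; apply/forallP => i; apply/forallP => j.
by rewrite !perm1 !ffunE E_ltn //= !tE h_mono ?inE.
Qed.

(** * Interpolation and blow-ups *)

Section Interpolation.
Variable B : tournament.
Local Notation N := (tvcount B).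

Definition interp_rel (k : nat) : rel 'I_N :=
  fun a b => if (a < k) && (b < k) then tadj B a b else (a < b).

Lemma interp_irr k a : ~~ interp_rel k a a.
Proof. by rewrite /interp_rel; case: ifP => _; rewrite ?tadj_irr ?ltnn. Qed.

Lemma interp_tot k a b : a != b -> interp_rel k a b = ~~ interp_rel k b a.
Proof.
by move=> ab; rewrite /interp_rel andbC; case: ifP => _; [apply: tadj_tot | apply: ltn_ord_tot].
Qed.

Definition interp (k : nat) : tournament :=
  @Tournament N (interp_rel k) (@interp_irr k) (@interp_tot k).

Lemma interp0 : tadj (interp 0) =2 fun a b => (a < b).
Proof. by []. Qed.

Lemma interpN : tadj (interp N) =2 tadj B.
Proof. by move=> a b; rewrite /= /interp_rel !ltn_ord. Qed.

Lemma interpS (z : 'I_N) : {in predC1 z &, tadj (interp z.+1) =2 tadj (interp z)}.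
Proof.
have ltnSz (a : 'I_N) : a != z -> (a < z.+1) = (a < z).
  by rewrite -val_eqE /= ltnS leq_eqVlt => /negbTE ->.
by move=> a b; rewrite !inE => az bz; rewrite /= /interp_rel !ltnSz.
Qed.

Lemma interp_ordered_prefix (M k : nat) (a b : 'I_N) :
  (forall a b : 'I_N, a < M -> b < M -> tadj B a b = (a < b)) ->
  a < M -> b < M -> tadj (interp k) a b = (a < b).
Proof. by move=> B_ltn aM bM; rewrite /= /interp_rel; case: ifP; rewrite ?B_ltn. Qed.

End Interpolation.

Section Blowup.
Variables (H : tournament) (m : nat).
Local Notation n := (tvcount H).

Lemma part_subproof (a : 'I_(n * m)) : a %/ m < n.
Proof.
have m_gt0 : 0 < m by case: (posnP m) => // m0; case: a; rewrite m0 muln0.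
by rewrite ltn_divLR.
Qed.

Definition part (a : 'I_(n * m)) : 'I_n := Ordinal (part_subproof a).

Definition blowup_rel : rel 'I_(n * m) :=
  fun a b => if part a == part b then (a < b) else tadj H (part a) (part b).

Lemma blowup_irr a : ~~ blowup_rel a a.
Proof. by rewrite /blowup_rel eqxx ltnn. Qed.

Lemma blowup_tot a b : a != b -> blowup_rel a b = ~~ blowup_rel b a.
Proof.
move=> ab; rewrite /blowup_rel eq_sym.
by case: eqP => [_ | /eqP ba]; [apply: ltn_ord_tot | rewrite tadj_tot // eq_sym].
Qed.

Definition blowup : tournament := @Tournament (n * m) blowup_rel blowup_irr blowup_tot.

Lemma card_part (w : 'I_n) : #|[pred a | part a == w]| = m.
Proof.
case: (posnP m) => [m0 | m_gt0].
  have := max_card [pred a | part a == w].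
  by rewrite card_ord [in X in _ <= X]m0 muln0 leqn0 => /eqP ->.
by rewrite -[RHS](@card_ord_divn_eq (n * m) m w) ?leq_mul2r ?ltn_ord ?orbT.
Qed.

Lemma blowup_first_part (a b : 'I_(n * m)) : a < m -> b < m -> blowup_rel a b = (a < b).
Proof.
move=> am bm; rewrite /blowup_rel (_ : part a = part b) ?eqxx //.
by apply: val_inj; rewrite /= !divn_small.
Qed.

Lemma blowup_embedding (g : 'I_n -> 'I_(n * m)) (pi : 'I_n -> 'I_n) :
  (forall i, part (g i) = pi i) ->
  (forall i j, pi i != pi j -> tadj H (pi i) (pi j) = tadj H i j) ->
  (forall i j, i != j -> pi i = pi j -> (g i < g j) = tadj H i j) ->
  injective g /\ forall i j, tadj H i j = blowup_rel (g i) (g j).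
Proof.
move=> g_part pi_adj g_lt; split=> [i j gij | i j].
  apply/eqP; apply: contraT => ij.
  have pij : pi i = pi j by rewrite -!g_part gij.
  have ji : j != i by rewrite eq_sym.
  have := tadj_tot _ _ _ ij; rewrite -(g_lt _ _ ij pij) -(g_lt _ _ ji (esym pij)).
  by rewrite gij ltnn.
rewrite /blowup_rel !g_part; case: eqP => [pij | /eqP pij]; last by rewrite pi_adj.
by case: (eqVneq i j) => [-> | ij]; rewrite ?ltnn ?(negbTE (tadj_irr _ _)) ?g_lt.
Qed.

Definition transversals : {set {ffun 'I_n -> 'I_(n * m)}} :=
  [set g : {ffun 'I_n -> 'I_(n * m)} | [forall w, part (g w) == w]].

Lemma card_transversals : #|transversals| = m ^ n.
Proof.
have -> : #|transversals| = #|family (fun w => [pred a | part a == w])|.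
  by apply: eq_card => g; rewrite inE; apply/forallP/familyP => g_part w; apply: g_part.
by rewrite card_family_prod (eq_bigr _ (fun w _ => card_part w)) prod_nat_const card_ord.
Qed.

Lemma transversal_part g : g \in transversals -> forall w, part (g w) = w.
Proof. by rewrite inE => /forallP g_part w; apply/eqP. Qed.

Lemma transversal_embedding g : g \in transversals ->
  injective g /\ forall i j, tadj H i j = blowup_rel (g i) (g j).
Proof.
move=> /transversal_part g_part; apply: (blowup_embedding (pi := id)) => // i j ij.
by move/eqP: ij.
Qed.

Lemma fact_expn_leq_copies_blowup : n`! * m ^ n <= copies H (tadj blowup).
Proof.
rewrite -card_transversals; apply: fact_card_leq_copies; first exact: transversal_embedding.
move=> g g' /transversal_part g_part /transversal_part g'_part t g_eq; apply/permP => w.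
by rewrite perm1 -{2}(g_part w) g_eq /= g'_part.
Qed.

Definition near_transversal (u v : 'I_n) (g : 'I_n -> 'I_(n * m)) : Prop :=
  forall w, if w \in [:: u; v] then is_true (part (g w) \in [:: u; v]) else part (g w) = w.

Lemma transversal_near g u v : g \in transversals -> near_transversal u v g.
Proof. by move=> /transversal_part g_part w; rewrite g_part; case: ifP. Qed.

Lemma blowup_rigid (u v : 'I_n) (g g' : 'I_n -> 'I_(n * m)) (t : {perm 'I_n}) :
  (forall i j, tadj H i j = blowup_rel (g i) (g j)) ->
  (forall i j, tadj H i j = blowup_rel (g' i) (g' j)) ->
  near_transversal u v g -> near_transversal u v g' -> (forall w, g w = g' (t w)) -> t = 1%g.
Proof.
move=> adj_g adj_g' near_g near_g' g_eq.
apply: (@aut_fixing_all_but_two H t u v) => [i j | w wP].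
  by rewrite adj_g' -!g_eq -adj_g.
have := near_g w; rewrite (negbTE wP) => gw.
have := near_g' (t w); rewrite -g_eq gw.
by case: ifP => [| _ <-] //; rewrite (negbTE wP).
Qed.

End Blowup.

Section TwinBlowup.
Variables (H : tournament) (r : nat) (u v : 'I_(tvcount H)).
Hypotheses (r_gt0 : 0 < r) (uv_twins : twins H u v) (adj_uv : tadj H u v).
Local Notation n := (tvcount H).
Local Notation m := (2 * r).
Local Notation part := (@part H m).

(* [u] goes to the lower and [v] to the upper half of part [x], so that the order of
   [g u] and [g v] in the blow-up agrees with [tadj H u v]. *)
Definition twin_block (x w : 'I_n) : pred 'I_(n * m) :=
  if w == u then [pred a : 'I_(n * m) | a %/ r == 2 * x]
  else if w == v then [pred a : 'I_(n * m) | a %/ r == (2 * x).+1]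
  else [pred a | part a == w].

Definition twin_placements (x : 'I_n) : {set {ffun 'I_n -> 'I_(n * m)}} :=
  [set g : {ffun 'I_n -> 'I_(n * m)} | [forall w, g w \in twin_block x w]].

Let u_neq_v : u != v. Proof. by case: uv_twins. Qed.

Lemma card_twin_placements x : #|twin_placements x| = r * r * m ^ (n - 2).
Proof.
have half_card c : c < 2 * n -> #|[pred a : 'I_(n * m) | a %/ r == c]| = r.
  by move=> cn; rewrite card_ord_divn_eq // mulnA leq_mul2r (mulnC n 2) cn orbT.
have -> : #|twin_placements x| = #|family (twin_block x)|.
  by apply: eq_card => g; rewrite inE; apply/forallP/familyP => g_in w; apply: g_in.
rewrite card_family_prod -[n in n - 2]card_ord -(prod_nat_except2 _ _ _ u_neq_v).
apply: eq_bigr => w _; rewrite /twin_block.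
have xn := ltn_ord x.
by case: eqP => _; [|case: eqP => _]; rewrite ?card_part ?half_card //; lia.
Qed.

Lemma twin_placement_part x g : g \in twin_placements x ->
  forall w, part (g w) = if w \in [:: u; v] then x else w.
Proof.
have div2r (a : nat) : a %/ (2 * r) = a %/ r %/ 2 by rewrite -divnMA (mulnC r 2).
rewrite inE => /forallP g_in w; apply: val_inj => /=; have := g_in w.
rewrite /twin_block !inE; case: eqP => [_ /eqP gu | _]; first by rewrite div2r gu mulKn.
case: eqP => [_ /eqP gv | _ /eqP /(congr1 val) //].
by rewrite div2r gv -addn1 mulnC divnMDl // divn_small ?addn0.
Qed.

Lemma twin_placement_near x g : x \in [:: u; v] -> g \in twin_placements x ->
  near_transversal u v g.
Proof. by move=> xP /twin_placement_part g_part w; case: ifP => wP; rewrite g_part wP. Qed.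

Lemma twin_placement_lt x g : g \in twin_placements x -> g u < g v.
Proof.
have vu : v != u by rewrite eq_sym u_neq_v.
rewrite inE => /forallP g_in; have := g_in u; have := g_in v.
rewrite /twin_block !eqxx (negbTE vu) !inE => /eqP gv /eqP gu.
by rewrite ltnNge; apply/negP => /(leq_div2r r); rewrite gu gv ltnn.
Qed.

Lemma twin_placement_embedding x g : x \in [:: u; v] -> g \in twin_placements x ->
  injective g /\ forall i j, tadj H i j = blowup_rel (g i) (g j).
Proof.
move=> xP g_in; apply: (blowup_embedding (pi := fun w => if w \in [:: u; v] then x else w)).
- exact: twin_placement_part.
- move=> i j; case: ifP => iP; case: ifP => jP; rewrite ?eqxx // => _.
    by have [-> _] := twins_adj uv_twins xP iP (negbT jP).
  by have [_ ->] := twins_adj uv_twins xP jP (negbT iP).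
move=> i j ij; case: ifP => iP; case: ifP => jP.
- move: iP jP ij; rewrite !inE => /orP[] /eqP -> /orP[] /eqP -> //; rewrite ?eqxx // => vu _.
    by rewrite (twin_placement_lt g_in) adj_uv.
  by rewrite ltnNge ltnW ?(twin_placement_lt g_in) // tadj_tot // adj_uv.
- by move=> xj; rewrite -xj xP in jP.
- by move=> ix; rewrite ix xP in iP.
by move=> eq_ij; rewrite eq_ij eqxx in ij.
Qed.

Definition twin_family := transversals H m :|: twin_placements u :|: twin_placements v.

Lemma twin_family_cases g : g \in twin_family ->
  g \in transversals H m \/ exists2 x, x \in [:: u; v] & g \in twin_placements x.
Proof.
by case/setUP => [/setUP[] | ] g_in; [left | right; exists u | right; exists v];
  rewrite // !inE eqxx ?orbT.
Qed.

Lemma twin_family_embedding g : g \in twin_family ->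
  injective g /\ forall i j, tadj H i j = blowup_rel (g i) (g j).
Proof.
by case/twin_family_cases => [/transversal_embedding // | [x]]; apply: twin_placement_embedding.
Qed.

Lemma twin_family_near g : g \in twin_family -> near_transversal u v g.
Proof. by case/twin_family_cases => [/transversal_near // | [x]]; apply: twin_placement_near. Qed.

Lemma card_twin_family : #|twin_family| = m ^ n + 2 * (r * r * m ^ (n - 2)).
Proof.
pose sig (g : {ffun 'I_n -> 'I_(n * m)}) := (part (g u), part (g v)).
have disjoint_sig (A B : {set {ffun 'I_n -> 'I_(n * m)}}) a b :
    a != b -> {in A, forall g, sig g = a} -> {in B, forall g, sig g = b} -> A :&: B = set0.
  move=> ab sigA sigB; apply/setP => g; rewrite !inE.
  by apply/negbTE/andP => -[/sigA + /sigB] => -> eq_ab; rewrite eq_ab eqxx in ab.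
have uP : u \in [:: u; v] by rewrite mem_head.
have vP : v \in [:: u; v] by rewrite !inE eqxx orbT.
have sig_T : {in transversals H m, forall g, sig g = (u, v)}.
  by move=> g /transversal_part g_part; rewrite /sig !g_part.
have sig_P x : x \in [:: u; v] -> {in twin_placements x, forall g, sig g = (x, x)}.
  by move=> xP g /twin_placement_part g_part; rewrite /sig !g_part uP vP.
have uv_vv : (u, v) != (v, v) by rewrite xpair_eqE (negbTE u_neq_v).
have uu_vv : (u, u) != (v, v) by rewrite xpair_eqE (negbTE u_neq_v).
have uv_uu : (u, v) != (u, u) by rewrite xpair_eqE eqxx eq_sym (negbTE u_neq_v).
rewrite cardsU setIUl (disjoint_sig _ _ _ _ uv_vv sig_T (sig_P _ vP)).
rewrite (disjoint_sig _ _ _ _ uu_vv (sig_P _ uP) (sig_P _ vP)) setU0 cards0 subn0.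
rewrite cardsU (disjoint_sig _ _ _ _ uv_uu sig_T (sig_P _ uP)) cards0 subn0.
by rewrite card_transversals !card_twin_placements -addnA addnn -mul2n.
Qed.

Lemma fact_expn_leq_copies_twin_blowup : 3 * (n`! * m ^ n) <= 2 * copies H (tadj (blowup H m)).
Proof.
have n_ge2 : 1 < n by have := max_card [set u; v]; rewrite cards2 u_neq_v card_ord.
have three_halves : 3 * m ^ n = 2 * (m ^ n + 2 * (r * r * m ^ (n - 2))).
  have m_n : m ^ n = m ^ (n - 2) * (2 * r) ^ 2 by rewrite -expnD subnK.
  by rewrite m_n -mulnn; lia.
rewrite mulnCA three_halves mulnCA leq_mul2l /= -card_twin_family.
apply: fact_card_leq_copies => [g /twin_family_embedding // | g g' g_in g'_in t g_eq].
have [[_ adj_g] [_ adj_g']] := (twin_family_embedding g_in, twin_family_embedding g'_in).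
exact: blowup_rigid adj_g adj_g' (twin_family_near g_in) (twin_family_near g'_in) g_eq.
Qed.

End TwinBlowup.

(** * Densities *)

Section Densities.
Local Open Scope R_scope.

Lemma INR_expn (a k : nat) : INR (a ^ k) = INR a ^ k.
Proof. by elim: k => [|k IH] //; rewrite expnS mult_INR IH. Qed.

Lemma INR_gt0 (a : nat) : (0 < a)%N -> 0 < INR a.
Proof. by move=> a_gt0; apply/lt_0_INR/ltP. Qed.

Lemma INR_div_le (a b c d : nat) : (0 < c)%N -> (0 < d)%N -> (a * d <= b * c)%N ->
  INR a / INR c <= INR b / INR d.
Proof.
move=> /INR_gt0 c_gt0 /INR_gt0 d_gt0 /leP/le_INR; rewrite !mult_INR => abcd.
apply: (Rmult_le_reg_r (INR c * INR d)); first exact: Rmult_lt_0_compat.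
have -> : INR a / INR c * (INR c * INR d) = INR a * INR d by field; lra.
by have -> : INR b / INR d * (INR c * INR d) = INR b * INR c by field; lra.
Qed.

Lemma INR_div_lt (a b c d : nat) : (0 < c)%N -> (0 < d)%N -> (a * d < b * c)%N ->
  INR a / INR c < INR b / INR d.
Proof.
move=> /INR_gt0 c_gt0 /INR_gt0 d_gt0 /ltP/lt_INR; rewrite !mult_INR => abcd.
apply: (Rmult_lt_reg_r (INR c * INR d)); first exact: Rmult_lt_0_compat.
have -> : INR a / INR c * (INR c * INR d) = INR a * INR d by field; lra.
by have -> : INR b / INR d * (INR c * INR d) = INR b * INR c by field; lra.
Qed.

Lemma Rabs_sub_div_INR (a b c D : nat) : (0 < D)%N -> (a <= b + c)%N -> (b <= a + c)%N ->
  Rabs (INR a / INR D - INR b / INR D) <= INR c / INR D.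
Proof.
move=> /INR_gt0 D_gt0 /leP/le_INR + /leP/le_INR; rewrite !plus_INR => abc bac.
rewrite /Rdiv -Rmult_minus_distr_r Rabs_mult (Rabs_right (/ INR D)).
  by apply: Rmult_le_compat_r; [left; apply: Rinv_0_lt_compat | apply: Rabs_le; split; lra].
by left; apply: Rinv_0_lt_compat.
Qed.

Lemma discrete_ivt (d : nat -> R) (t e : R) (N : nat) :
  d 0%N < t -> t <= d N -> (forall k, (k < N)%N -> Rabs (d k.+1 - d k) <= e) ->
  exists k, Rabs (d k - t) <= e.
Proof.
elim: N => [|N IH] d0t tdN steps; first lra.
have [tdN' | dNt] := Rle_lt_dec t (d N); first by apply: IH => // k kN; apply/steps/ltnW.
by exists N.+1; have := steps N (ltnSn N); rewrite /Rabs; do 2 case: Rcase_abs; lra.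
Qed.

Lemma Un_cv_of_bound (u : nat -> R) (l c : R) :
  (forall j, Rabs (u j - l) <= c / INR j.+1) -> Un_cv u l.
Proof.
move=> u_close e e_gt0; have [N N_large] := INR_archimed e (Rabs c) e_gt0.
exists N => j jN; rewrite /R_dist; apply: Rle_lt_trans (u_close j) _.
have j1_gt0 : 0 < INR j.+1 by apply: INR_gt0.
have Nj : INR N <= INR j.+1 by apply/le_INR/le_S.
apply: (Rmult_lt_reg_r (INR j.+1)) => //; rewrite /Rdiv Rmult_assoc Rinv_l ?Rmult_1_r; last lra.
have := Rle_abs c; nra.
Qed.

Lemma densE (H G : tournament) : dens H G =
  if (tvcount G < tvcount H)%N then 0
  else INR (copies H (tadj G)) / INR (tvcount G ^_ tvcount H).
Proof. by []. Qed.

Lemma rand_densE (F : tournament) :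
  rand_dens F = INR (tvcount F)`! / INR (aut_card F * 2 ^ 'C(tvcount F, 2)).
Proof.
have a_gt0 := INR_gt0 (aut_card_gt0 F).
have two_pow_gt0 : 0 < 2 ^ 'C(tvcount F, 2) by apply: pow_lt; lra.
rewrite /rand_dens mult_INR INR_expn (_ : INR 2 = 2) /=; last lra.
by field; split; lra.
Qed.

Lemma rand_dens_gt0 (F : tournament) : 0 < rand_dens F.
Proof.
rewrite rand_densE; apply: Rdiv_lt_0_compat; apply: INR_gt0; first exact: fact_gt0.
by rewrite muln_gt0 aut_card_gt0 expn_gt0.
Qed.

Lemma rand_dens_le_dens (H G : tournament) :
  (tvcount H <= tvcount G)%N ->
  ((tvcount H)`! * tvcount G ^_ tvcount H <=
     copies H (tadj G) * (aut_card H * 2 ^ 'C(tvcount H, 2)))%N ->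
  rand_dens H <= dens H G.
Proof.
move=> HG bound; rewrite rand_densE densE ltnNge HG /=.
by apply: INR_div_le bound; rewrite ?ffact_gt0 // muln_gt0 aut_card_gt0 expn_gt0.
Qed.

Lemma inv_le_dens (F G : tournament) (q : nat) :
  (tvcount F <= tvcount G)%N -> (0 < q)%N ->
  (tvcount G ^_ tvcount F <= copies F (tadj G) * q)%N -> INR 1 / INR q <= dens F G.
Proof.
move=> FG q_gt0 bound; rewrite densE ltnNge FG.
by apply: INR_div_le; rewrite ?ffact_gt0 ?mul1n.
Qed.

Lemma dist_dens_interp (H B : tournament) (k : nat) : (k < tvcount B)%N ->
  Rabs (dens H (interp B k.+1) - dens H (interp B k)) <=
  INR (tvcount H * tvcount B ^ (tvcount H).-1) / INR (tvcount B ^_ tvcount H).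
Proof.
move=> kN; rewrite !densE /=; case: ltnP => [nN | nN].
  by rewrite ffact_small //= /Rdiv Rinv_0 Rmult_0_r Rminus_0_r Rabs_R0; lra.
apply: Rabs_sub_div_INR; first by rewrite ffact_gt0.
  exact: copies_vertex_change (interpS (z := Ordinal kN)).
apply: (@copies_vertex_change H _ _ _ (Ordinal kN)) => a b aP bP.
by symmetry; apply: (interpS (z := Ordinal kN)).
Qed.

Lemma dens_interp0 (H B : tournament) : ~ transitive_tournament H -> dens H (interp B 0) = 0.
Proof.
move=> H_intrans; rewrite densE copies_eq0_transitive //.
  by rewrite [INR 0]/= /Rdiv Rmult_0_l; case: ifP.
by move=> b a c; rewrite !interp0; apply: ltn_trans.
Qed.

Lemma dens_interpN (H B : tournament) : dens H (interp B (tvcount B)) = dens H B.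
Proof. by rewrite !densE (eq_copies _ (@interpN B)). Qed.

Lemma interp_step_le (n N : nat) : (2 * n <= N)%N -> (0 < N)%N ->
  INR (n * N ^ n.-1) / INR (N ^_ n) <= INR (n * 2 ^ n) / INR N.
Proof.
move=> nN N_gt0; apply: INR_div_le => //; first by rewrite ffact_gt0; lia.
case: n nN => [|n] nN //=; rewrite -mulnA -expnSr -mulnA leq_mul2l.
by rewrite expn_leq_pow2_ffact ?orbT.
Qed.

Lemma dens_transT_ge (K c M : nat) (G : tournament) :
  (2 * K <= M)%N -> (M <= tvcount G <= c * M)%N ->
  (forall a b : 'I_(tvcount G), (a < M)%N -> (b < M)%N -> tadj G a b = (a < b)%N) ->
  INR 1 / INR (K`! * (2 * c) ^ K) <= dens (transT K) G.
Proof.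
move=> KM /andP[MN NcM] G_ord; apply: inv_le_dens => /=; first lia.
  by rewrite muln_gt0 fact_gt0 expn_gt0; case: c NcM => [|c] /=; rewrite ?orbT //; lia.
apply: leq_trans (ffact_leq_expn _ _) _; apply: leq_trans (leq_expn2r K NcM) _.
apply: (@leq_trans ((2 * c * (M - K.-1)) ^ K)).
  by apply: leq_expn2r; rewrite [(2 * c)%N]mulnC -mulnA leq_mul2l; apply/orP; right; lia.
rewrite expnMn mulnC mulnA leq_mul2r; apply/orP; right.
apply: leq_trans (expn_leq_ffact M K) _; rewrite -bin_ffact leq_mul2r.
by rewrite (bin_leq_copies_transT _ MN G_ord) orbT.
Qed.

Lemma rand_dens_transT_le (K : nat) : rand_dens (transT K) <= INR K`! / INR (2 ^ 'C(K, 2)).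
Proof.
rewrite rand_densE; apply: INR_div_le; rewrite ?muln_gt0 ?aut_card_gt0 ?expn_gt0 //=.
by rewrite leq_mul2l leq_pmull ?aut_card_gt0 ?orbT.
Qed.

Lemma not_quasirandom_of_transitive_part (c K : nat) (G : nat -> tournament) (M : nat -> nat) :
  (K`! ^ 2 * (2 * c) ^ K < 2 ^ 'C(K, 2))%N ->
  (forall j, 2 * K <= M j /\ M j <= tvcount (G j) <= c * M j)%N ->
  (forall j (a b : 'I_(tvcount (G j))), (a < M j)%N -> (b < M j)%N -> tadj (G j) a b = (a < b)%N) ->
  ~ quasirandom G.
Proof.
move=> K_large G_size G_ord [_ /(_ (transT K)) cv_T].
have q_gt0 : (0 < K`! * (2 * c) ^ K)%N.
  rewrite muln_gt0 fact_gt0 expn_gt0 muln_gt0 /=; have [KM /andP[MN NcM]] := G_size 0%N.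
  case: (posnP c) => [c0 | _] //=.
  by rewrite c0 mul0n in NcM; apply/eqP; lia.
have gap : rand_dens (transT K) < INR 1 / INR (K`! * (2 * c) ^ K).
  apply: Rle_lt_trans (rand_dens_transT_le K) _.
  by apply: INR_div_lt; rewrite ?expn_gt0 // mul1n mulnA mulnn.
have [N close] := cv_T _ (Rgt_minus _ _ gap).
have [KM MNc] := G_size N; have T_dense := dens_transT_ge KM MNc (G_ord N).
have := close N (le_n N); rewrite /R_dist.
have := Rle_abs (dens (transT K) (G N) - rand_dens (transT K)); lra.
Qed.

Lemma rand_dens_le_dens_blowup (H : tournament) (m p q : nat) : (0 < m)%N -> (0 < p)%N ->
  (p * ((tvcount H)`! * m ^ tvcount H) <= q * copies H (tadj (blowup H m)))%N ->
  (q * tvcount H ^ tvcount H <= p * (aut_card H * 2 ^ 'C(tvcount H, 2)))%N ->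
  rand_dens H <= dens H (blowup H m).
Proof.
move=> m_gt0 p_gt0 many_copies few_auts.
apply: rand_dens_le_dens => /=; first by rewrite leq_pmulr.
set n := tvcount H; set c := copies _ _; rewrite -(leq_pmul2l p_gt0).
apply: (@leq_trans (p * (n`! * m ^ n) * n ^ n)%N).
  rewrite -mulnA leq_mul2l -mulnA leq_mul2l (mulnC (m ^ _)%N) -expnMn.
  by rewrite ffact_leq_expn !orbT.
apply: leq_trans (leq_mul many_copies (leqnn _)) _.
by rewrite -mulnA mulnCA [in X in (_ <= X)%N]mulnCA leq_mul2l few_auts orbT.
Qed.

Lemma blowup_dense_of_aut (H : tournament) (m : nat) : (0 < m)%N -> has_nontrivial_aut H ->
  (tvcount H ^ tvcount H <= 2 * 2 ^ 'C(tvcount H, 2))%N -> rand_dens H <= dens H (blowup H m).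
Proof.
move=> m_gt0 /aut_card_gt1 a_gt1 nn_small.
apply: (@rand_dens_le_dens_blowup _ _ 1 1) => //; rewrite !mul1n.
  exact: fact_expn_leq_copies_blowup.
by apply: leq_trans nn_small _; rewrite leq_mul2r a_gt1 orbT.
Qed.

Lemma blowup_dense_of_twins (H : tournament) (r : nat) (u v : 'I_(tvcount H)) :
  (0 < r)%N -> twins H u v -> (2 * tvcount H ^ tvcount H <= 3 * 2 ^ 'C(tvcount H, 2))%N ->
  rand_dens H <= dens H (blowup H (2 * r)).
Proof.
wlog adj_uv : u v / tadj H u v => [main r_gt0 uv_twins | r_gt0 uv_twins nn_small].
  case: (boolP (tadj H u v)) => [uv | vu]; first exact: (main u v uv r_gt0 uv_twins).
  apply: (main v u) => //; last exact: twins_sym.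
  by case: uv_twins => uv _; rewrite tadj_tot 1?eq_sym.
apply: (@rand_dens_le_dens_blowup _ _ 3 2) => //; first by rewrite muln_gt0.
  exact: (fact_expn_leq_copies_twin_blowup r_gt0 uv_twins adj_uv).
by apply: leq_trans nn_small _; rewrite leq_mul2l leq_pmull ?aut_card_gt0.
Qed.

Section NotForcing.
Variables (H : tournament) (K : nat).
Local Notation n := (tvcount H).
(* Even, so that twins can be split inside a part, and at least [2 * K]. *)
Local Notation part_size j := (2 * (j + K.+1))%N.
Hypotheses (H_intrans : ~ transitive_tournament H)
  (K_large : (K`! ^ 2 * (2 * n) ^ K < 2 ^ 'C(K, 2))%N)
  (dense_blowups : forall r, (0 < r)%N -> rand_dens H <= dens H (blowup H (2 * r))).

Lemma interp_blowup_close (j : nat) : exists k,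
  Rabs (dens H (interp (blowup H (part_size j)) k) - rand_dens H) <= INR (n * 2 ^ n) / INR j.+1.
Proof.
have n_gt0 := tvcount_gt0_intransitive H_intrans; set B := blowup H (part_size j).
have N_large : (2 * n <= tvcount B)%N /\ (j < tvcount B)%N by rewrite /=; split; nia.
have [k close] : exists k,
    Rabs (dens H (interp B k) - rand_dens H) <= INR (n * 2 ^ n) / INR (tvcount B).
  apply: (@discrete_ivt _ _ _ (tvcount B)).
  - by rewrite dens_interp0 //; apply: rand_dens_gt0.
  - by rewrite dens_interpN; apply: dense_blowups; rewrite addnS.
  move=> k kN; apply: Rle_trans (dist_dens_interp H kN) (interp_step_le _ _); lia.
exists k; apply: Rle_trans close _; apply: INR_div_le; rewrite ?muln_gt0 //; first lia.
by rewrite leq_mul2l; apply/orP; right; case: N_large.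
Qed.

Theorem not_quasirandom_forcing : ~ quasirandom_forcing H.
Proof.
move=> forcing; have n_gt0 := tvcount_gt0_intransitive H_intrans.
have [k k_close] := ClassicalEpsilon.choice _ interp_blowup_close.
pose G j := interp (blowup H (part_size j)) (k j).
apply: (@not_quasirandom_of_transitive_part n K G (fun j => part_size j) K_large).
- by move=> j; rewrite /= leq_pmull //; split; lia.
- move=> j a b aM bM; rewrite /G.
  by apply: (@interp_ordered_prefix (blowup H _) _ _ a b _ aM bM) => *; apply: blowup_first_part.
apply: forcing; last exact: Un_cv_of_bound k_close.
by move=> M0; exists M0 => j jM; rewrite /=; nia.
Qed.

End NotForcing.

End Densities.

Theorem not_forcing_of_twins_or_aut (H : tournament) (K : nat) :
  2 * tvcount H ^ tvcount H <= 3 * 2 ^ 'C(tvcount H, 2) ->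
  K`! ^ 2 * (2 * tvcount H) ^ K < 2 ^ 'C(K, 2) ->
  ~ transitive_tournament H -> has_twins H \/ has_nontrivial_aut H -> ~ quasirandom_forcing H.
Proof.
move=> nn_small K_large H_intrans H_special.
apply: (not_quasirandom_forcing H_intrans K_large) => r r_gt0.
case: H_special => [[u [v uv_twins]] | H_aut]; first exact: blowup_dense_of_twins uv_twins nn_small.
by apply: blowup_dense_of_aut; rewrite ?muln_gt0 //; lia.
Qed.

(* These unary numbers are far too large to evaluate, so everything is reduced to
   exponents of 2; [fact32] is cleared because [done] would try to unify the goal with
   it and evaluate [32`!]. *)
Lemma fact32_sqr_mul_12_pow_lt : 32`! ^ 2 * (2 * 6) ^ 32 < 2 ^ 'C(32, 2).
Proof.
have fact32 : 32`! <= 2 ^ (5 * 32).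
  have two_pow5 : 32 = 2 ^ 5 by [].
  apply: leq_trans (fact_leq_expn 32) _.
  by rewrite [X in X ^ 32]two_pow5 -expnM; apply: leqnn.
apply: leq_ltn_trans (leq_mul (leq_expn2r 2 fact32) (leq_expn2r 32 (isT : 2 * 6 <= 2 ^ 4))) _.
by clear fact32; rewrite bin2 -!expnM -expnD ltn_exp2l.
Qed.

Theorem proposition3p2 (H : tournament) :
  tvcount H = 6 ->
  ~ transitive_tournament H ->
  (has_twins H \/ has_nontrivial_aut H) ->
  ~ quasirandom_forcing H.
Proof.
move=> H6; apply: (@not_forcing_of_twins_or_aut H 32); rewrite H6.
  by [].
exact: fact32_sqr_mul_12_pow_lt.
Qed.
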